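(* Consider the controlled system below. (i) For any ${\sf a}\in\mathcal{A}$ there exists $\tilde{\sf a}\in\mathcal{A}^R$ such that $X_t^R({\sf a})=X_t^R(\tilde{\sf a})$ for all $t\in\{0,\dots,T\}$ almost surely. (ii) For any $\tilde{\sf a}\in\mathcal{A}^R$ there exists ${\sf a}\in\mathcal{A}$ such that $X_t^R({\sf a})=X_t^R(\tilde{\sf a})$ for all $t\in\{0,\dots,T\}$ almost surely.
   Context: Setting: $\mathcal{T}=\{0,\dots,T\}$, $\mathcal{T}_0=\{0,\dots,T-1\}$, probability space $(\Omega,\mathcal{F},\mathbb{P})$ with filtration $\{\mathcal{F}_t\}$; $\varepsilon_1,\dots,\varepsilon_T$ independent $\mathbb{R}^q$-valued random variables ($\varepsilon_{t+1}$ being $\mathcal{F}_{t+1}$-measurable); measurable $K:\mathbb{R}^{d+p}\to\mathbb{R}^r$, $H:\mathbb{R}^{r+q}\to\mathbb{R}^d$; for each $t\in\mathcal{T}_0$ a set-valued map $x\mapsto A_t(x)\subseteq\mathbb{R}^p$ and a reward $f_t(x,a)$. For an action process ${\sf a}=\{a_t\}_{t\in\mathcal{T}_0}$ the state process $X({\sf a})$ valued in $\mathcal{X}\subseteq\mathbb{R}^d$ is $X_0$ given, $X_{t+1}=H(K(X_t,a_t),\varepsilon_{t+1})$. $\mathcal{A}$ is the set of ${\sf a}$ with $a_t$ $\mathcal{F}_t$-measurable and $a_t\in A_t(X_t({\sf a}))$ for all $t\in\mathcal{T}_0$. Truncation: $\mathcal{X}_R\subseteq\mathcal{X}$ bounded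 with interior $\mathring{\mathcal{X}}_R$, boundary $\partial\mathcal{X}_R$, compact strictly convex closure; $X_0\in\mathring{\mathcal{X}}_R$; $\mathcal{Q}$ the Euclidean nearest-point projection onto $\mathrm{cl}(\mathcal{X}_R)$; $\tilde H(k,e)=\mathcal{Q}(H(k,e))$ if $H(k,e)\notin\mathring{\mathcal{X}}_R$, else $H(k,e)$. For any adapted ${\sf a}$, $X^R({\sf a})$ is defined by $X^R_0=X_0$ and $X_{t+1}^R=X_t^R\mathbb{I}_{\{X_t^R\in\partial\mathcal{X}_R\}}+\tilde H(K(X_t^R,a_t),\varepsilon_{t+1})\mathbb{I}_{\{X_t^R\in\mathring{\mathcal{X}}_R\}}$ (equivalently $X_t^R=X_t\mathbb{I}_{\{\tau^R>t\}}+\mathcal{Q}(X_{\tau^R\wedge t})\mathbb{I}_{\{\tau^R\le t\}}$ with $\tau^R$ the first time $t$ with $X_t\notin\mathring{\mathcal{X}}_R$). $\mathcal{A}^R$ is the set of ${\sf a}$ with $a_t$ $\mathcal{F}_t$-measurable and $a_t\in A_t(X_t^R({\sf a}))$ for all $t\in\mathcal{T}_0$. Standing assumption: for each $t\in\mathcal{T}_0$ there is a measurable $a_t^*$ with $a_t^*(x)\in\arg\max_{a\in A_t(x)}f_t(x,a)$ for $x\in\partial\mathcal{X}_R$, and a measurable $\hat a_t$ with $\hat a_t(x)\in A_t(x)$ for all $x\in\mathcal{X}$. *)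

From HB Require Import structures.
From mathcomp Require Import all_boot all_order all_algebra.
From mathcomp Require Import all_classical all_reals all_analysis.
Set Implicit Arguments. Unset Strict Implicit. Unset Printing Implicit Defensive.
Import Order.TTheory GRing.Theory Num.Theory.
Import numFieldNormedType.Exports.
Local Open Scope classical_set_scope.
Local Open Scope ring_scope.

Definition borel_rV (R : realType) (n : nat) : set (set 'rV[R]_n) :=
  <<s [set A | open A] >>.

Definition meas_into (T : Type) (R : realType) (n : nat)
  (G : set (set T)) (f : T -> 'rV[R]_n) : Prop :=
  forall B, borel_rV B -> G (f @^-1` B).

Definition borel_fun (R : realType) (m n : nat) (f : 'rV[R]_m -> 'rV[R]_n) :=
  meas_into (@borel_rV R m) f.

Definition edist2 (R : realType) (n : nat) (x y : 'rV[R]_n) : R :=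
  \sum_(i < n) (x ord0 i - y ord0 i) ^+ 2.

Definition nearest_proj (R : realType) (n : nat) (C : set 'rV[R]_n)
  (Q : 'rV[R]_n -> 'rV[R]_n) : Prop :=
  forall x, C (Q x) /\ forall y, C y -> edist2 x (Q x) <= edist2 x y.

Definition strictly_convex (R : realType) (n : nat) (C : set 'rV[R]_n) : Prop :=
  forall x y (l : R), C x -> C y -> x != y -> 0 < l < 1 ->
    (interior C) (l *: x + (1 - l) *: y).

Definition boundary (R : realType) (n : nat) (S : set 'rV[R]_n) : set 'rV[R]_n :=
  closure S `\` interior S.

Definition filtration (d : measure_display) (Om : measurableType d)
  (F : nat -> set (set Om)) : Prop :=
  (forall t, sigma_algebra setT (F t)) /\
  (forall t, F t `<=` measurable) /\
  (forall s t, (s <= t)%N -> F s `<=` F t).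

Definition indep_noise (d : measure_display) (Om : measurableType d)
  (R : realType) (P : probability Om R) (q T : nat)
  (eps : nat -> Om -> 'rV[R]_q) : Prop :=
  forall B : nat -> set 'rV[R]_q, (forall t, borel_rV (B t)) ->
    P (\big[setI/setT]_(1 <= t < T.+1) (eps t @^-1` B t)) =
    (\prod_(1 <= t < T.+1) P (eps t @^-1` B t))%E.

Definition is_argmax (R : realType) (p : nat) (A : set 'rV[R]_p)
  (g : 'rV[R]_p -> R) (a : 'rV[R]_p) : Prop :=
  A a /\ forall b, A b -> g b <= g a.

Section Dynamics.
Variables (Om : Type) (R : realType) (d p r q : nat).
Variables (K : 'rV[R]_(d + p) -> 'rV[R]_r) (H : 'rV[R]_(r + q) -> 'rV[R]_d).
Variable (eps : nat -> Om -> 'rV[R]_q) (X0 : 'rV[R]_d).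

Fixpoint state (a : nat -> Om -> 'rV[R]_p) (t : nat) (w : Om) : 'rV[R]_d :=
  match t with
  | 0 => X0
  | t'.+1 => H (row_mx (K (row_mx (state a t' w) (a t' w))) (eps t'.+1 w))
  end.

Variables (XR : set 'rV[R]_d) (Q : 'rV[R]_d -> 'rV[R]_d).

Definition Htil (k : 'rV[R]_r) (e : 'rV[R]_q) : 'rV[R]_d :=
  if asbool (interior XR (H (row_mx k e))) then H (row_mx k e) else Q (H (row_mx k e)).

Fixpoint stateR (a : nat -> Om -> 'rV[R]_p) (t : nat) (w : Om) : 'rV[R]_d :=
  match t with
  | 0 => X0
  | t'.+1 =>
      let x := stateR a t' w in
      if asbool (boundary XR x) then x
      else if asbool (interior XR x) then Htil (K (row_mx x (a t' w))) (eps t'.+1 w)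
      else 0
  end.
End Dynamics.

Definition adapted (Om : Type) (R : realType) (p T : nat)
  (F : nat -> set (set Om)) (a : nat -> Om -> 'rV[R]_p) : Prop :=
  forall t, (t < T)%N -> meas_into (F t) (a t).

From HB Require Import structures.
From mathcomp Require Import all_boot all_order all_algebra.
From mathcomp Require Import all_classical all_reals all_analysis.
From mathcomp Require Import ring lra.
Set Implicit Arguments.
Unset Strict Implicit.
Unset Printing Implicit Defensive.
Import Order.TTheory GRing.Theory Num.Theory.
Import numFieldNormedType.Exports.
Local Open Scope classical_set_scope.
Local Open Scope ring_scope.

(* The nearest-point projection Q onto the closed strictly convex set cl(X_R)
   satisfies the variational inequality <x - Q x, y - Q x> <= 0 on cl(X_R); hence
   it is nonexpansive (so continuous and Borel) and it fixes every point it sends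
   into the interior, i.e. it never maps a point outside the interior of X_R into
   it.  Therefore the truncated state X^R(a) coincides with X(a) while it is
   interior, freezes on the boundary once it leaves the interior, and depends on
   the control only at times when it is interior.  For (i), keep a while X^R(a)
   is interior and play the feasible a^* on the boundary.  For (ii), keep a~ while
   X^R(a~) is interior and afterwards play a^ in feedback form along the
   untruncated state, which stays in the state space by induction.  All switches
   are Borel conditions on adapted processes, so both new controls are adapted. *)

Section borel_rV.
Variables (R : realType) (n : nat).

Lemma borel_rV_measurableE :
  @borel_rV R n = [set A : set 'rV[R]_n | open A].-sigma.-measurable.
Proof. by []. Qed.

Lemma borel_open (U : set 'rV[R]_n) : open U -> borel_rV U.
Proof. exact: sub_sigma_algebra. Qed.

Lemma borel_closed (V : set 'rV[R]_n) : closed V -> borel_rV V.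
Proof.
move=> /closed_openC/borel_open; rewrite borel_rV_measurableE.
by move=> /measurableC; rewrite setCK.
Qed.

Lemma borel_interior (S : set 'rV[R]_n) : borel_rV (interior S).
Proof. by apply: borel_open; exact: open_interior. Qed.

Lemma borel_boundary (S : set 'rV[R]_n) : borel_rV (boundary S).
Proof.
rewrite borel_rV_measurableE; apply: measurableD; last exact: borel_interior.
by apply: borel_closed; exact: closed_closure.
Qed.

End borel_rV.

Section rational_balls.
Variables (R : realType) (n : nat).
Implicit Types (x : 'rV[R]_n) (U : set 'rV[R]_n).

Lemma ball_rVP x e y : ball x e y <-> 0 < e /\ forall j, `|x ord0 j - y ord0 j| < e.
Proof.
split=> [[e0 xy]|[e0 xy]]; first by split=> // j; exact: xy.
by split=> // i j; rewrite (ord1 i); exact: xy.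
Qed.

Definition rat_ball (c : 'rV[rat]_n * rat) : set 'rV[R]_n :=
  ball (map_mx (@ratr R) c.1) (ratr c.2).

Lemma rat_dense_rV x e : 0 < e -> exists c : 'rV[rat]_n, ball x e (map_mx (@ratr R) c).
Proof.
move=> e0; have coord j : exists c : rat, `|x ord0 j - ratr c| < e.
  have /rat_in_itvoo[c /itvP c_near] : x ord0 j - e < x ord0 j + e by rewrite ltrD2l gtrN.
  have lo : x ord0 j - e < ratr c by rewrite c_near.
  have hi : ratr c < x ord0 j + e by rewrite c_near.
  by exists c; rewrite ltr_distl; apply/andP; split; lra.
have [c cx] := choice coord.
by exists (\row_j c j); apply/ball_rVP; split=> // j; rewrite !mxE.
Qed.

Lemma open_bigcup_rat_ball U : open U ->
  U = \bigcup_(c in [set c | rat_ball c `<=` U]) rat_ball c.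
Proof.
move=> oU; apply/seteqP; split=> [x Ux|x [c cU /cU] //].
have /nbhs_ballP[e /= e0 xeU] : nbhs x U by exact: open_nbhs_nbhs.
have /rat_in_itvoo[rho /itvP rho_e] : e / 3 < e / 2.
  by rewrite ltr_pM2l // ltf_pV2 ?posrE // ltr_nat.
have e3 : 0 < e / 3 by rewrite divr_gt0.
have rho_lo : e / 3 < ratr rho by rewrite rho_e.
have rho_hi : ratr rho < e / 2 by rewrite rho_e.
have [c xc] := rat_dense_rV x e3.
exists (c, rho); last by apply: le_ball (ball_sym xc); exact: ltW.
move=> y cy; apply: xeU; apply: le_ball (ball_triangle xc cy).
lra.
Qed.

End rational_balls.

Section meas_into.
Variables (Om : pointedType) (G : set (set Om)) (R : realType).
Hypothesis G_sigma : sigma_algebra setT G.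

(* [G] is the σ-algebra of the measurable type [G.-sigma], so the closure
   lemmas for measurable sets apply to it. *)
Let measurableE : G.-sigma.-measurable = G := measurable_g_measurableTypeE G_sigma.

Lemma meas_into_open n (f : Om -> 'rV[R]_n) :
  (forall U, open U -> G (f @^-1` U)) -> meas_into G f.
Proof.
move=> fU B; suff : @borel_rV R n `<=` image_set_system setT f G.
  by move/(_ B); rewrite /image_set_system /= setTI.
apply: smallest_sub; first exact: sigma_algebra_image.
by move=> U oU; rewrite /image_set_system /= setTI; exact: fU.
Qed.

Lemma meas_into_balls n (f : Om -> 'rV[R]_n) :
  (forall c e, G (f @^-1` ball c e)) -> meas_into G f.
Proof.
move=> fball; apply: meas_into_open => U /open_bigcup_rat_ball ->.
rewrite preimage_bigcup bigcup_mkcond -measurableE.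
apply: countable_bigcupT_measurable => [|c]; first exact: countableP.
by case: ifP => _; [rewrite measurableE; exact: fball|exact: measurable0].
Qed.

Lemma meas_into_cst n (c : 'rV[R]_n) : meas_into G (fun=> c).
Proof.
move=> B _; rewrite preimage_cst -measurableE.
by case: ifP => _; [exact: measurableT|exact: measurable0].
Qed.

Lemma meas_into_comp m n (f : Om -> 'rV[R]_m) (h : 'rV[R]_m -> 'rV[R]_n) :
  meas_into G f -> borel_fun h -> meas_into G (fun w => h (f w)).
Proof. by move=> mf mh B mB; rewrite comp_preimage; apply: mf; exact: mh. Qed.

Lemma meas_into_if m n (S : set 'rV[R]_m) (h : Om -> 'rV[R]_m) (f g : Om -> 'rV[R]_n) :
  borel_rV S -> meas_into G h -> meas_into G f -> meas_into G g ->
  meas_into G (fun w => if asbool (S (h w)) then f w else g w).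
Proof.
move=> mS mh mf mg B mB.
have -> : (fun w => if asbool (S (h w)) then f w else g w) @^-1` B =
    (h @^-1` S `&` f @^-1` B) `|` (~` (h @^-1` S) `&` g @^-1` B).
  by apply/seteqP; split=> w /=; case: asboolP => Shw; by [left|right|case=> -[]].
have [hS fB gB] := And3 (mh S mS) (mf B mB) (mg B mB).
rewrite -measurableE in hS fB gB *.
by apply: measurableU; apply: measurableI => //; exact: measurableC.
Qed.

Lemma meas_into_row_mx m n (f : Om -> 'rV[R]_m) (g : Om -> 'rV[R]_n) :
  meas_into G f -> meas_into G g -> meas_into G (fun w => row_mx (f w) (g w)).
Proof.
move=> mf mg; apply: meas_into_balls => c e.
have -> : (fun w => row_mx (f w) (g w)) @^-1` ball c e =
    f @^-1` ball (lsubmx c) e `&` g @^-1` ball (rsubmx c) e.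
  rewrite -[c]hsubmxK; apply/seteqP; split=> w /=.
    rewrite row_mxKl row_mxKr => /ball_rVP[e0 cw].
    split; apply/ball_rVP; split=> // j.
      by have := cw (lshift n j); rewrite !row_mxEl.
    by have := cw (rshift m j); rewrite !row_mxEr.
  rewrite row_mxKl row_mxKr => -[/ball_rVP[e0 cf] /ball_rVP[_ cg]].
  apply/ball_rVP; split=> // j; rewrite -(splitK j).
  by case: (fintype.split j) => k /=; rewrite ?row_mxEl ?row_mxEr.
rewrite -measurableE; apply: measurableI; rewrite measurableE; [apply: mf|apply: mg];
  by apply: borel_open; exact: ball_open.
Qed.

End meas_into.

Lemma continuous_borel_fun (R : realType) m n (h : 'rV[R]_m -> 'rV[R]_n) :
  continuous h -> borel_fun h.
Proof.
move=> /continuousP hU; apply: meas_into_open; first exact: smallest_sigma_algebra.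
by move=> U /hU; exact: borel_open.
Qed.

Section edist2.
Context {R : realType} {n : nat}.
Implicit Types (x y z : 'rV[R]_n).

Lemma edist2_ge0 x y : 0 <= edist2 x y.
Proof. by apply: sumr_ge0 => i _; exact: sqr_ge0. Qed.

Lemma edist2_coord x y j : (x ord0 j - y ord0 j) ^+ 2 <= edist2 x y.
Proof. by rewrite /edist2 (bigD1 j) //= lerDl; apply: sumr_ge0 => i _; exact: sqr_ge0. Qed.

Lemma edist2_le0 x y : edist2 x y <= 0 -> x = y.
Proof.
move=> xy0; apply/rowP => j; apply/eqP; rewrite -subr_eq0 -sqrf_eq0 eq_le sqr_ge0 andbT.
exact: le_trans (edist2_coord x y j) xy0.
Qed.

Lemma ball_edist2 x y e : 0 < e -> edist2 x y < e ^+ 2 -> ball x e y.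
Proof.
move=> e0 xy; apply/ball_rVP; split=> // j.
have := le_lt_trans (edist2_coord x y j) xy.
by move: (x ord0 j - y ord0 j) => a a2; rewrite ltr_norml; apply/andP; split; nra.
Qed.

Lemma edist2_ball x y e : ball x e y -> edist2 x y <= n%:R * e ^+ 2.
Proof.
move=> /ball_rVP[_ xy].
have -> : n%:R * e ^+ 2 = \sum_(j < n) e ^+ 2 by rewrite sumr_const card_ord mulr_natl.
apply: ler_sum => j _; have := xy j; move: (x ord0 j - y ord0 j) => a.
by rewrite ltr_norml => /andP[? ?]; nra.
Qed.

Lemma edist2_lerp x y z l : edist2 x (l *: y + (1 - l) *: z) =
  edist2 x z - 2 * l * (\sum_i (x ord0 i - z ord0 i) * (y ord0 i - z ord0 i))
  + l ^+ 2 * edist2 y z.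
Proof.
rewrite /edist2 !mulr_sumr -sumrB -big_split /=.
by apply: eq_bigr => i _; rewrite !mxE; ring.
Qed.

End edist2.

Section nearest_proj.
Variables (R : realType) (n : nat) (C : set 'rV[R]_n) (Q : 'rV[R]_n -> 'rV[R]_n).
Implicit Types (x y : 'rV[R]_n).
Hypothesis Q_nearest : nearest_proj C Q.
Hypothesis C_convex : forall x y (l : R), C x -> C y -> 0 < l < 1 ->
  C (l *: x + (1 - l) *: y).

Lemma nearest_proj_variational x y : C y ->
  \sum_i (x ord0 i - Q x ord0 i) * (y ord0 i - Q x ord0 i) <= 0.
Proof.
move=> Cy; set I := \sum_i _; rewrite leNgt; apply/negP => I0.
have D0 := edist2_ge0 y (Q x); set D := edist2 y (Q x) in D0.
(* For 0 < l < 1 the distance from x to Q x + l (y - Q x) is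
   edist2 x (Q x) - 2 l I + l^2 D, which this l makes smaller. *)
pose l := I / (2 * I + D).
have l_def : l * (2 * I + D) = I by rewrite mulfVK // gt_eqF //; lra.
have l0 : 0 < l by rewrite divr_gt0 //; lra.
have l1 : l < 1 by rewrite ltr_pdivrMr; lra.
have Cl : C (l *: y + (1 - l) *: Q x).
  by apply: C_convex => //; [exact: (Q_nearest x).1|rewrite l0 l1].
have := (Q_nearest x).2 _ Cl; rewrite edist2_lerp -/I -/D.
nra.
Qed.

Lemma nearest_proj_nonexpansive x y : edist2 (Q x) (Q y) <= edist2 x y.
Proof.
have vx := nearest_proj_variational x (Q_nearest y).1.
have vy := nearest_proj_variational y (Q_nearest x).1.
rewrite -subr_le0 /edist2 -sumrB; apply: le_trans (_ : \sum_i 2 *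
    ((x ord0 i - Q x ord0 i) * (Q y ord0 i - Q x ord0 i) +
     (y ord0 i - Q y ord0 i) * (Q x ord0 i - Q y ord0 i)) <= 0).
  apply: ler_sum => i _; move: (x ord0 i) (y ord0 i) (Q x ord0 i) (Q y ord0 i) => a b c d.
  by have := sqr_ge0 ((a - b) - (c - d)); nra.
by rewrite -mulr_sumr big_split /=; lra.
Qed.

Lemma nearest_proj_ball x y e : ball x (e / (n%:R + 1)) y -> ball (Q x) e (Q y).
Proof.
(* Since n (e / (n + 1))^2 < e^2, no square root is needed to pass from the
   sup distance to the Euclidean one and back. *)
move=> xy; have /ball_rVP[d0 _] := xy.
set d := e / (n%:R + 1) in xy d0.
have n0 : 0 <= n%:R :> R by [].
have de : e = d * (n%:R + 1) by rewrite mulfVK // gt_eqF // ltr_wpDl.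
clearbody d.
apply: ball_edist2; first by rewrite de mulr_gt0 // ltr_wpDl.
apply: le_lt_trans (nearest_proj_nonexpansive x y) _.
move/edist2_ball: xy => /le_lt_trans; apply.
by rewrite de exprMn mulrC ltr_pM2l ?exprn_gt0 //; nra.
Qed.

Lemma nearest_proj_continuous : continuous Q.
Proof.
apply/continuousP => U oU; rewrite openE => x /= QxU.
have /nbhs_ballP[e /= e0 eU] : nbhs (Q x) U by exact: open_nbhs_nbhs.
apply/nbhs_ballP; exists (e / (n%:R + 1)) => /=; first by rewrite divr_gt0 // ltr_wpDl.
by move=> y /nearest_proj_ball /eU.
Qed.

Lemma nearest_proj_interior y : interior C (Q y) -> Q y = y.
Proof.
set z := Q y => /nbhs_ballP[e /= e0 eC].
have E0 := edist2_ge0 y z; set E := edist2 y z in E0.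
pose s := e / (E + 1).
have se : s * (E + 1) = e by rewrite mulfVK // gt_eqF //; lra.
have s0 : 0 < s by rewrite divr_gt0 //; lra.
clearbody s.
have Cw : C (z + s *: (y - z)).
  apply: eC; apply: ball_edist2 => //.
  have -> : edist2 z (z + s *: (y - z)) = s ^+ 2 * E.
    by rewrite /E /edist2 mulr_sumr; apply: eq_bigr => i _; rewrite !mxE; ring.
  by rewrite -se exprMn ltr_pM2l ?exprn_gt0 //; nra.
have := nearest_proj_variational y Cw.
have -> : \sum_i (y ord0 i - z ord0 i) * ((z + s *: (y - z)) ord0 i - z ord0 i) = s * E.
  by rewrite /E /edist2 mulr_sumr; apply: eq_bigr => i _; rewrite !mxE; ring.
by move=> sE0; apply/esym/edist2_le0; rewrite -/E; nra.
Qed.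

End nearest_proj.

Lemma strictly_convex_convex (R : realType) n (C : set 'rV[R]_n) :
  strictly_convex C -> forall x y (l : R), C x -> C y -> 0 < l < 1 ->
  C (l *: x + (1 - l) *: y).
Proof.
move=> Csc x y l Cx Cy l01; have [<-|xy] := eqVneq x y.
  by rewrite -scalerDl addrC subrK scale1r.
exact: interior_subset (Csc x y l Cx Cy xy l01).
Qed.

Section truncation.
Variables (R : realType) (n : nat) (XR : set 'rV[R]_n) (Q : 'rV[R]_n -> 'rV[R]_n).
Hypothesis Q_nearest : nearest_proj (closure XR) Q.
Hypothesis XR_convex : strictly_convex (closure XR).

Lemma borel_nearest_proj : borel_fun Q.
Proof.
apply: continuous_borel_fun.
exact: nearest_proj_continuous Q_nearest (strictly_convex_convex XR_convex).
Qed.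

Lemma nearest_proj_not_interior y : ~ interior XR y -> ~ interior XR (Q y).
Proof.
move=> yXR /[dup] /(interiorS (@subset_closure _ XR)) QyXR.
by rewrite (nearest_proj_interior Q_nearest _ QyXR) //; exact: strictly_convex_convex.
Qed.

End truncation.

Section controlled_state.
Variables (Om : Type) (R : realType) (d p r q : nat).
Variables (K : 'rV[R]_(d + p) -> 'rV[R]_r) (H : 'rV[R]_(r + q) -> 'rV[R]_d).
Variables (eps : nat -> Om -> 'rV[R]_q) (X0 : 'rV[R]_d).

Local Notation X := (state K H eps X0).

Lemma state_viable (T : nat) (A : nat -> 'rV[R]_d -> set 'rV[R]_p) (Xsp : set 'rV[R]_d) a :
  Xsp X0 ->
  (forall t w x u, (t < T)%N -> Xsp x -> A t x u ->
     Xsp (H (row_mx (K (row_mx x u)) (eps t.+1 w)))) ->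
  (forall t w, (t < T)%N -> Xsp (X a t w) -> A t (X a t w) (a t w)) ->
  forall t w, (t <= T)%N -> Xsp (X a t w).
Proof.
move=> XspX0 Xsp_step aA + w; elim=> // t IH tT.
have Xt := IH (ltnW tT); exact: Xsp_step tT Xt (aA t w tT Xt).
Qed.

Fixpoint feedback_state (g : nat -> Om -> 'rV[R]_d -> 'rV[R]_p) t w : 'rV[R]_d :=
  if t is t'.+1 then
    H (row_mx (K (row_mx (feedback_state g t' w) (g t' w (feedback_state g t' w))))
              (eps t'.+1 w))
  else X0.

Lemma state_feedback g t w :
  X (fun t w => g t w (feedback_state g t w)) t w = feedback_state g t w.
Proof. by elim: t => //= t ->. Qed.

Variables (XR : set 'rV[R]_d) (Q : 'rV[R]_d -> 'rV[R]_d).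
Hypothesis Q_nearest : nearest_proj (closure XR) Q.
Hypothesis XR_convex : strictly_convex (closure XR).
Hypothesis X0_interior : interior XR X0.

Local Notation XRt := (stateR K H eps X0 XR Q).

Lemma stateRS a t w : XRt a t.+1 w =
  if asbool (boundary XR (XRt a t w)) then XRt a t w
  else if asbool (interior XR (XRt a t w)) then
    Htil H XR Q (K (row_mx (XRt a t w) (a t w))) (eps t.+1 w)
  else 0.
Proof. by []. Qed.

Lemma stateR_closure a t w : closure XR (XRt a t w).
Proof.
elim: t => [|t IH]; first by apply: subset_closure; exact: interior_subset.
rewrite stateRS; case: asboolP => [[]//|not_bd].
(* The junk value [0] of [stateR] is unreachable: a point of the closure is
   interior or on the boundary. *)
case: asboolP => [int|not_int]; last by exfalso; apply: not_bd.
rewrite /Htil; case: asboolP => [/interior_subset/subset_closure//|_].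
exact: (Q_nearest _).1.
Qed.

Lemma stateR_boundary a t w : ~ interior XR (XRt a t w) -> boundary XR (XRt a t w).
Proof. by split=> //; exact: stateR_closure. Qed.

Lemma stateR_interior a t w : interior XR (XRt a t w) -> XRt a t w = X a t w.
Proof.
elim: t => // t IH; rewrite stateRS.
case: asboolP => [[_ not_int]//|not_bd].
case: asboolP => [int|/stateR_boundary//]; rewrite /Htil (IH int).
case: asboolP => // not_int.
by move/(nearest_proj_not_interior Q_nearest XR_convex not_int).
Qed.

Lemma eq_stateR a b : (forall t w, interior XR (XRt a t w) -> b t w = a t w) ->
  forall t w, XRt b t w = XRt a t w.
Proof.
move=> ba; elim=> // t IH w; rewrite !stateRS IH.
by case: asboolP => // _; case: asboolP => // /ba ->.
Qed.

End controlled_state.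

Section adapted_state.
Variables (dO : measure_display) (Om : measurableType dO) (R : realType).
Variables (d p r q T : nat) (F : nat -> set (set Om)).
Hypothesis F_filtration : filtration F.
Variables (K : 'rV[R]_(d + p) -> 'rV[R]_r) (H : 'rV[R]_(r + q) -> 'rV[R]_d).
Variables (eps : nat -> Om -> 'rV[R]_q) (X0 : 'rV[R]_d).
Hypothesis eps_meas : forall t, (1 <= t <= T)%N -> meas_into (F t) (eps t).
Hypotheses (K_borel : borel_fun K) (H_borel : borel_fun H).

Let F_sigma t : sigma_algebra setT (F t) := F_filtration.1 t.

Lemma meas_into_filtration s t m (f : Om -> 'rV[R]_m) :
  (s <= t)%N -> meas_into (F s) f -> meas_into (F t) f.
Proof. by move=> st mf B mB; apply: F_filtration.2.2 st _ (mf B mB). Qed.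

Lemma meas_into_step t (x : Om -> 'rV[R]_d) (a : Om -> 'rV[R]_p) : (t < T)%N ->
  meas_into (F t) x -> meas_into (F t) a ->
  meas_into (F t.+1) (fun w => H (row_mx (K (row_mx (x w) (a w))) (eps t.+1 w))).
Proof.
move=> tT mx ma; apply: meas_into_comp H_borel; apply: meas_into_row_mx => //.
  apply: meas_into_filtration (leqnSn t) _; apply: meas_into_comp K_borel.
  exact: meas_into_row_mx.
by apply: eps_meas; rewrite ltnS tT.
Qed.

Variables (XR : set 'rV[R]_d) (Q : 'rV[R]_d -> 'rV[R]_d).
Hypothesis Q_borel : borel_fun Q.

Lemma stateR_adapted a : adapted T F a ->
  forall t, (t <= T)%N -> meas_into (F t) (stateR K H eps X0 XR Q a t).
Proof.
move=> ma; elim=> [_|t IH tT]; first exact: meas_into_cst.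
have mX := IH (ltnW tT); have mstep := meas_into_step tT mX (ma t tT).
have mX' := meas_into_filtration (leqnSn t) mX.
apply: meas_into_if => //; first exact: borel_boundary.
apply: meas_into_if => //; [exact: borel_interior| |exact: meas_into_cst].
by apply: meas_into_if => //; [exact: borel_interior|exact: meas_into_comp mstep Q_borel].
Qed.

Lemma feedback_adapted (g : nat -> Om -> 'rV[R]_d -> 'rV[R]_p) :
  (forall t x, (t < T)%N -> meas_into (F t) x -> meas_into (F t) (fun w => g t w (x w))) ->
  adapted T F (fun t w => g t w (feedback_state K H eps X0 g t w)).
Proof.
move=> mg; suff mY t : (t <= T)%N -> meas_into (F t) (feedback_state K H eps X0 g t).
  by move=> t tT; apply: mg tT (mY t (ltnW tT)).
elim: t => [_|t IH tT]; first exact: meas_into_cst.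
have mY := IH (ltnW tT); exact: meas_into_step tT mY (mg t _ tT mY).
Qed.

End adapted_state.

Section truncated_controls.
Variables (dO : measure_display) (Om : measurableType dO) (R : realType).
Variables (d p r q T : nat) (F : nat -> set (set Om)).
Variables (K : 'rV[R]_(d + p) -> 'rV[R]_r) (H : 'rV[R]_(r + q) -> 'rV[R]_d).
Variables (eps : nat -> Om -> 'rV[R]_q) (X0 : 'rV[R]_d).
Variables (A : nat -> 'rV[R]_d -> set 'rV[R]_p) (Xsp XR : set 'rV[R]_d).
Variables (Q : 'rV[R]_d -> 'rV[R]_d) (astar ahat : nat -> 'rV[R]_d -> 'rV[R]_p).
Hypothesis F_filtration : filtration F.
Hypothesis eps_meas : forall t, (1 <= t <= T)%N -> meas_into (F t) (eps t).
Hypotheses (K_borel : borel_fun K) (H_borel : borel_fun H).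
Hypothesis X0_Xsp : Xsp X0.
Hypothesis Xsp_step : forall t w x u, (t < T)%N -> Xsp x -> A t x u ->
  Xsp (H (row_mx (K (row_mx x u)) (eps t.+1 w))).
Hypothesis Q_nearest : nearest_proj (closure XR) Q.
Hypothesis XR_convex : strictly_convex (closure XR).
Hypothesis X0_interior : interior XR X0.
Hypothesis astar_borel : forall t, (t < T)%N -> borel_fun (astar t).
Hypothesis astar_feasible : forall t x, (t < T)%N -> boundary XR x -> A t x (astar t x).
Hypothesis ahat_borel : forall t, (t < T)%N -> borel_fun (ahat t).
Hypothesis ahat_feasible : forall t x, (t < T)%N -> Xsp x -> A t x (ahat t x).

Local Notation X := (state K H eps X0).
Local Notation XRt := (stateR K H eps X0 XR Q).

Definition admissible a :=
  adapted T F a /\ forall t w, (t < T)%N -> A t (X a t w) (a t w).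

Definition admissibleR a :=
  adapted T F a /\ forall t w, (t < T)%N -> A t (XRt a t w) (a t w).

Let XRt_adapted a t : adapted T F a -> (t < T)%N -> meas_into (F t) (XRt a t).
Proof.
move=> ma /ltnW; apply: stateR_adapted => //.
exact: borel_nearest_proj Q_nearest XR_convex.
Qed.

Let XRt_interior a t w : interior XR (XRt a t w) -> XRt a t w = X a t w.
Proof. exact: stateR_interior. Qed.

Let XRt_boundary a t w : ~ interior XR (XRt a t w) -> boundary XR (XRt a t w).
Proof. exact: stateR_boundary. Qed.

Lemma admissibleR_of_admissible a : admissible a ->
  exists2 b, admissibleR b & forall t w, XRt a t w = XRt b t w.
Proof.
move=> [ma aA].
pose b t w := if asbool (interior XR (XRt a t w)) then a t w else astar t (XRt a t w).
have XRt_ba : forall t w, XRt b t w = XRt a t w.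
  by apply: eq_stateR => t w int; rewrite /b asboolT.
exists b => [|t w]; last by rewrite XRt_ba.
have mXRt t : (t < T)%N -> meas_into (F t) (XRt a t) by exact: XRt_adapted.
split=> [t tT|t w tT].
  apply: (meas_into_if (F_filtration.1 t) (borel_interior XR) (mXRt _ tT) (ma _ tT)).
  exact: meas_into_comp (mXRt _ tT) (astar_borel tT).
rewrite XRt_ba /b; case: asboolP => [int|/XRt_boundary bd]; last exact: astar_feasible.
by rewrite {1}(XRt_interior int); exact: aA.
Qed.

Lemma admissible_of_admissibleR b : admissibleR b ->
  exists2 a, admissible a & forall t w, XRt a t w = XRt b t w.
Proof.
move=> [mb bA].
(* a^ must be feasible at the untruncated state, which depends on the control
   itself: hence the feedback form. *)
pose g t w x := if asbool (interior XR (XRt b t w)) then b t w else ahat t x.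
pose a t w := g t w (feedback_state K H eps X0 g t w).
have XRt_ab : forall t w, XRt a t w = XRt b t w.
  by apply: eq_stateR => t w int; rewrite /a /g asboolT.
have aA t w : (t < T)%N -> Xsp (X a t w) -> A t (X a t w) (a t w).
  move=> tT Xsp_t; rewrite {2}/a /g; case: asboolP => [int|_].
    by rewrite -XRt_interior XRt_ab //; exact: bA.
  by rewrite -state_feedback; exact: ahat_feasible.
exists a => [|t w]; last exact: XRt_ab.
split=> [|t w tT].
  apply: feedback_adapted => // t x tT mx.
  have mXRt : meas_into (F t) (XRt b t) by exact: XRt_adapted.
  apply: (meas_into_if (F_filtration.1 t) (borel_interior XR) mXRt (mb _ tT)).
  exact: meas_into_comp mx (ahat_borel tT).
apply: (aA _ _ tT); apply: (state_viable X0_Xsp Xsp_step aA); exact: ltnW.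
Qed.

End truncated_controls.

Theorem lemma2
  (R : realType) (dO : measure_display) (Om : measurableType dO)
  (P : probability Om R) (F : nat -> set (set Om))
  (T d p r q : nat)
  (eps : nat -> Om -> 'rV[R]_q)
  (K : 'rV[R]_(d + p) -> 'rV[R]_r) (H : 'rV[R]_(r + q) -> 'rV[R]_d)
  (A : nat -> 'rV[R]_d -> set 'rV[R]_p) (f : nat -> 'rV[R]_d -> 'rV[R]_p -> R)
  (Xsp : set 'rV[R]_d) (X0 : 'rV[R]_d)
  (XR : set 'rV[R]_d) (Q : 'rV[R]_d -> 'rV[R]_d)
  (astar ahat : nat -> 'rV[R]_d -> 'rV[R]_p)
  (* probability space and filtration, noise *)
  (hF : filtration F)
  (heps_meas : forall t, (1 <= t <= T)%N -> meas_into (F t) (eps t))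
  (heps_indep : indep_noise P T eps)
  (hK : borel_fun K) (hH : borel_fun H)
  (* state space *)
  (hX0 : Xsp X0)
  (hXsp : forall t w x a, (t < T)%N -> Xsp x -> A t x a ->
            Xsp (H (row_mx (K (row_mx x a)) (eps t.+1 w))))
  (* truncation *)
  (hXR : XR `<=` Xsp) (hXRb : bounded_set XR)
  (hXRc : compact (closure XR)) (hXRsc : strictly_convex (closure XR))
  (hX0R : interior XR X0)
  (hQ : nearest_proj (closure XR) Q)
  (* standing assumption *)
  (hastar_m : forall t, (t < T)%N -> borel_fun (astar t))
  (hastar : forall t x, (t < T)%N -> boundary XR x ->
              is_argmax (A t x) (f t x) (astar t x))
  (hahat_m : forall t, (t < T)%N -> borel_fun (ahat t))
  (hahat : forall t x, (t < T)%N -> Xsp x -> A t x (ahat t x)) :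
  let inA a := adapted T F a /\
      forall t w, (t < T)%N -> A t (state K H eps X0 a t w) (a t w) in
  let inAR a := adapted T F a /\
      forall t w, (t < T)%N -> A t (stateR K H eps X0 XR Q a t w) (a t w) in
  (forall a, inA a -> exists at_, inAR at_ /\
     {ae P, forall w, forall t, (t <= T)%N ->
        stateR K H eps X0 XR Q a t w = stateR K H eps X0 XR Q at_ t w}) /\
  (forall at_, inAR at_ -> exists a, inA a /\
     {ae P, forall w, forall t, (t <= T)%N ->
        stateR K H eps X0 XR Q a t w = stateR K H eps X0 XR Q at_ t w}).
Proof.
move=> inA inAR.
have astar_feasible t x : (t < T)%N -> boundary XR x -> A t x (astar t x).
  by move=> tT /(hastar t x tT) [].
split=> [a aA|b bAR].
  have [b bAR XRt_ab] := admissibleR_of_admissible hF heps_meas hK hH hQ hXRsc hX0R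
    hastar_m astar_feasible aA.
  by exists b; split=> //; apply: aeW => w t _; exact: XRt_ab.
have [a aA XRt_ab] := admissible_of_admissibleR hF heps_meas hK hH hX0 hXsp hQ hXRsc
  hX0R hahat_m hahat bAR.
by exists a; split=> //; apply: aeW => w t _; exact: XRt_ab.
Qed.
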